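(* For all integers $n,k \geq 2$ there exists a set $S \subset \mathbb{R}^2$ such that any $k$ points of $S$ are visible from a common point of $S$ through polygonal paths of length $\leq n$ in $S$, but there exist $k+1$ points of $S$ that are not visible from any common point of $S$ through polygonal paths of length $\leq n$ in $S$.
   Context: For $S \subset \mathbb{R}^2$ and $x,y \in S$, ''$x$ sees $y$ through $S$ by a polygonal path of length $m$'' means there exist distinct points $x_1,\ldots,x_{m-1}$ such that the polygonal path $[x,x_1]\cup[x_1,x_2]\cup\cdots\cup[x_{m-1},y]$ is contained in $S$ (for $m=1$ this means $[x,y]\subset S$). ''Visible through polygonal paths of length $\leq n$'' means visible by such a path of some length $m \leq n$. *)

From Stdlib Require Import Reals List.
Import ListNotations.
Open Scope R_scope.

Definition pt : Type := (R * R)%type.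

Definition segment (a b : pt) (z : pt) : Prop :=
  exists t : R, 0 <= t <= 1 /\
    fst z = (1 - t) * fst a + t * fst b /\
    snd z = (1 - t) * snd a + t * snd b.

Fixpoint path_in (S : pt -> Prop) (x : pt) (l : list pt) (y : pt) : Prop :=
  match l with
  | nil => forall z, segment x y z -> S z
  | z0 :: l' => (forall z, segment x z0 z -> S z) /\ path_in S z0 l' y
  end.

Definition sees_by_path (S : pt -> Prop) (m : nat) (x y : pt) : Prop :=
  exists l : list pt, length l = (m - 1)%nat /\ NoDup l /\ path_in S x l y.

Definition visible_le (S : pt -> Prop) (n : nat) (x y : pt) : Prop :=
  exists m : nat, (1 <= m <= n)%nat /\ sees_by_path S m x y.

From Stdlib Require Import Reals List Lra Lia FinFun Classical.
Import ListNotations.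
Open Scope R_scope.

(* The set is a fan of k+1 towers with k+1 hubs.  Tower i is the zigzag line
   through the points (i + zig h / 2, h), h = 1..n, resting on its base
   (i + 1/2, 1); hub j = (-2^j, 0) is joined by a spoke to every base but
   base j.  Hub m sees every point of tower i or of a spoke into base i, for
   i <> m, within n links: along the spoke to base i, then up the tower.  Any
   k points involve at most k indices, so some hub sees them all.
   Conversely, a segment inside the set can neither jump between towers nor
   pass a corner of one, so it climbs at most one level, and it can enter a
   tower from below only along a spoke through its base.  Hence a point seeing
   the top of tower i within n links lies on tower i or on a spoke into base i.
   No point does so for every i: towers are disjoint, and spokes into bases
   0, 1, 2 meet only if their hubs -2^j are in arithmetic progression. *)

Definition zig (h : nat) : R := if Nat.even h then 0 else 1.

Definition vertex (i h : nat) : pt := (INR i + zig h / 2, INR h).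
Definition base (i : nat) : pt := vertex i 1.
Definition hub_x (j : nat) : R := - 2 ^ j.
Definition hub (j : nat) : pt := (hub_x j, 0).

Definition tower (n i : nat) (z : pt) : Prop :=
  exists h, (1 <= h < n)%nat /\ segment (vertex i h) (vertex i (S h)) z.

Definition spoke (k i : nat) (z : pt) : Prop :=
  exists j, (j <= k)%nat /\ j <> i /\ segment (hub j) (base i) z.

Definition tower_fan (n k : nat) (z : pt) : Prop :=
  exists i, (i <= k)%nat /\ (tower n i z \/ spoke k i z).

Definition tops (n k : nat) : list pt := map (fun i => vertex i n) (seq 0 (S k)).

Definition segment_in (A : pt -> Prop) (u v : pt) : Prop :=
  forall z, segment u v z -> A z.

Lemma INR_close_eq i j : INR j - 1 < INR i < INR j + 1 -> i = j.
Proof.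
  intros H.
  assert (i < S j)%nat by (apply INR_lt; rewrite S_INR; lra).
  assert (j < S i)%nat by (apply INR_lt; rewrite S_INR; lra).
  lia.
Qed.

Lemma INR_succ_le i j : (i < j)%nat -> INR i + 1 <= INR j.
Proof. intros H. rewrite <- S_INR. apply le_INR. exact H. Qed.

Lemma pow2_inj a b : 2 ^ a = 2 ^ b -> a = b.
Proof.
  intros E. destruct (Nat.lt_total a b) as [H | [H | H]]; auto;
    pose proof (Rlt_pow 2 _ _ ltac:(lra) H); lra.
Qed.

Lemma pow2_midpoint a b c : 2 ^ a + 2 ^ c = 2 * 2 ^ b -> a = c.
Proof.
  assert (Hlt : forall a c, (a < c)%nat -> 2 ^ a + 2 ^ c <> 2 * 2 ^ b).
  { clear a c. intros a c Hac E.
    pose proof (pow_lt 2 a ltac:(lra)). pose proof (Rlt_pow 2 a c ltac:(lra) Hac).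
    destruct (Nat.lt_ge_cases b c) as [Hbc | Hcb].
    - pose proof (Rle_pow 2 (S b) c ltac:(lra) Hbc) as H2.
      change (2 ^ S b) with (2 * 2 ^ b) in H2. lra.
    - pose proof (Rle_pow 2 c b ltac:(lra) Hcb). lra. }
  intros E. destruct (Nat.lt_total a c) as [H | [H | H]]; auto.
  - exfalso. exact (Hlt a c H E).
  - exfalso. apply (Hlt c a H). lra.
Qed.

Lemma exists_fresh_index k (L : list nat) : (length L <= k)%nat ->
  exists m, (m <= k)%nat /\ ~ In m L.
Proof.
  intros HL. apply NNPP. intros Hnone.
  assert (Hinc : incl (seq 0 (S k)) L).
  { intros m Hm. apply in_seq in Hm. apply NNPP. intros HmL.
    apply Hnone. exists m. split; [lia | exact HmL]. }
  pose proof (NoDup_incl_length (seq_NoDup (S k) 0) Hinc). rewrite length_seq in *. lia.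
Qed.

Lemma hub_x_bounds k j : (j <= k)%nat -> - 2 ^ k <= hub_x j <= -1.
Proof.
  intros Hj. unfold hub_x.
  pose proof (Rle_pow 2 j k ltac:(lra) Hj). pose proof (pow_R1_Rle 2 j ltac:(lra)). lra.
Qed.

Lemma ratio_unit p q : 0 <= p <= q -> 0 < q -> 0 <= p / q <= 1.
Proof.
  intros Hp Hq. split.
  - apply Rmult_le_pos; [lra | left; apply Rinv_0_lt_compat; lra].
  - apply (Rmult_le_reg_r q); [lra|]. unfold Rdiv.
    rewrite Rmult_assoc, Rinv_l; lra.
Qed.

Lemma segment_l a b : segment a b a.
Proof. exists 0. split; [lra | split; ring]. Qed.

Lemma segment_r a b : segment a b b.
Proof. exists 1. split; [lra | split; ring]. Qed.

Lemma segment_interpolate a b t : 0 <= t <= 1 ->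
  segment a b ((1 - t) * fst a + t * fst b, (1 - t) * snd a + t * snd b).
Proof. intros Ht. exists t. auto. Qed.

Lemma segment_sym a b z : segment a b z -> segment b a z.
Proof.
  intros [t [Ht [E1 E2]]]. exists (1 - t).
  split; [lra | split; [rewrite E1 | rewrite E2]; ring].
Qed.

Lemma segment_sub a b u v z :
  segment a b u -> segment a b v -> segment u v z -> segment a b z.
Proof.
  intros [s [Hs [Eu1 Eu2]]] [s' [Hs' [Ev1 Ev2]]] [t [Ht [E1 E2]]].
  exists ((1 - t) * s + t * s'). split; [nra|].
  split; [rewrite E1, Eu1, Ev1 | rewrite E2, Eu2, Ev2]; ring.
Qed.

Lemma segment_snd_ge a b z c : c <= snd a -> c <= snd b -> segment a b z -> c <= snd z.
Proof. intros Ha Hb [t [Ht [_ E]]]. rewrite E. nra. Qed.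

Lemma segment_collinear a b z : segment a b z ->
  (fst z - fst a) * (snd b - snd a) = (snd z - snd a) * (fst b - fst a).
Proof. intros [t [_ [E1 E2]]]. rewrite E1, E2. ring. Qed.

Lemma segment_at_height a b y : snd a < snd b -> snd a <= y <= snd b ->
  exists z, segment a b z /\ snd z = y.
Proof.
  intros Hab Hy.
  pose proof (ratio_unit (y - snd a) (snd b - snd a) ltac:(lra) ltac:(lra)) as Ht.
  eexists. split; [exact (segment_interpolate a b _ Ht)|]. simpl. field. lra.
Qed.

Lemma segment_at_fst a b x : fst a < fst b -> fst a <= x <= fst b ->
  exists z, segment a b z /\ fst z = x.
Proof.
  intros Hab Hx.
  pose proof (ratio_unit (x - fst a) (fst b - fst a) ltac:(lra) ltac:(lra)) as Ht.
  eexists. split; [exact (segment_interpolate a b _ Ht)|]. simpl. field. lra.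
Qed.

Lemma segment_in_sub A a b u v :
  segment_in A a b -> segment a b u -> segment a b v -> segment_in A u v.
Proof. intros H Hu Hv z Hz. apply H. exact (segment_sub a b u v z Hu Hv Hz). Qed.

Lemma segment_in_sym A a b : segment_in A a b -> segment_in A b a.
Proof. intros H z Hz. apply H, segment_sym, Hz. Qed.

Lemma zig_S h : zig (S h) = 1 - zig h.
Proof.
  unfold zig. rewrite Nat.even_succ, <- Nat.negb_even.
  destruct (Nat.even h); simpl; lra.
Qed.

Lemma zig_cases h : zig h = 0 \/ zig h = 1.
Proof. unfold zig. destruct (Nat.even h); auto. Qed.

Lemma base_eq i : base i = (INR i + 1 / 2, 1).
Proof. reflexivity. Qed.

Lemma tower_vertex n i h : (2 <= n)%nat -> (1 <= h <= n)%nat -> tower n i (vertex i h).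
Proof.
  intros Hn Hh. destruct (Nat.lt_ge_cases h n) as [Hlt | Hge].
  - exists h. split; [lia | apply segment_l].
  - exists (h - 1)%nat. split; [lia|].
    replace (S (h - 1)) with h by lia. apply segment_r.
Qed.

Lemma tower_coords n i z : tower n i z -> exists h, (1 <= h < n)%nat /\
  INR h <= snd z <= INR h + 1 /\
  fst z = INR i + ((INR h + 1 - snd z) * zig h + (snd z - INR h) * zig (S h)) / 2.
Proof.
  intros [h [Hh [t [Ht [E1 E2]]]]]. exists h. split; [exact Hh|].
  unfold vertex in E1, E2; cbn [fst snd] in E1, E2. rewrite S_INR in E2.
  split; [lra|]. rewrite E1, E2. field.
Qed.

Lemma tower_bounds n i z : tower n i z ->
  1 <= snd z <= INR n /\ INR i <= fst z <= INR i + 1 / 2.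
Proof.
  intros Hz. destruct (tower_coords _ _ _ Hz) as [h [Hh [Y X]]].
  pose proof (le_INR 1 h ltac:(lia)). pose proof (INR_succ_le h n ltac:(lia)).
  simpl INR in *. split; [lra|]. rewrite X.
  destruct (zig_cases h) as [-> | ->]; destruct (zig_cases (S h)) as [-> | ->];
    split; nra.
Qed.

Lemma tower_fst_at_level n i z m : tower n i z -> snd z = INR m -> fst z = INR i + zig m / 2.
Proof.
  intros Hz Y. destruct (tower_coords _ _ _ Hz) as [h [_ [Yh X]]].
  rewrite Y in Yh, X.
  assert (Hm : m = h \/ m = S h).
  { destruct Yh as [Y1 Y2]. apply INR_le in Y1.
    assert (m <= S h)%nat by (apply INR_le; rewrite S_INR; lra). lia. }
  destruct Hm as [-> | ->]; rewrite X; try rewrite S_INR; field.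
Qed.

Lemma tower_fst_between n i z m : tower n i z -> INR m < snd z < INR m + 1 ->
  fst z = INR i + ((INR m + 1 - snd z) * zig m + (snd z - INR m) * zig (S m)) / 2.
Proof.
  intros Hz Y. destruct (tower_coords _ _ _ Hz) as [h [_ [Yh X]]].
  replace m with h by (apply INR_close_eq; lra). exact X.
Qed.

(* A straight segment cannot pass through a corner of a tower. *)
Lemma tower_kink n i m e w1 w0 w2 : 0 < e < 1 ->
  tower n i w1 -> tower n i w0 -> tower n i w2 ->
  snd w1 = INR (S m) - e -> snd w0 = INR (S m) -> snd w2 = INR (S m) + e ->
  fst w1 + fst w2 <> 2 * fst w0.
Proof.
  intros He T1 T0 T2 Y1 Y0 Y2.
  rewrite (tower_fst_at_level _ _ _ _ T0 Y0).
  rewrite S_INR in Y1, Y2.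
  rewrite (tower_fst_between _ _ _ m T1) by lra.
  rewrite (tower_fst_between _ _ _ (S m) T2) by (rewrite S_INR; lra).
  rewrite Y1, Y2, S_INR, !zig_S.
  destruct (zig_cases m) as [-> | ->]; lra.
Qed.

Lemma tower_fst_off_gap n m i z : tower n m z -> fst z <> INR i - 1 / 4.
Proof.
  intros Hz E. destruct (tower_bounds _ _ _ Hz) as [_ X].
  destruct (Nat.lt_ge_cases m i) as [H | H].
  - pose proof (INR_succ_le _ _ H). lra.
  - pose proof (le_INR _ _ H). lra.
Qed.

Lemma segment_hub_base j i z : segment (hub j) (base i) z <->
  0 <= snd z <= 1 /\ fst z = hub_x j * (1 - snd z) + snd z * (INR i + 1 / 2).
Proof.
  rewrite base_eq. unfold hub. split.
  - intros [t [Ht [E1 E2]]]. cbn [fst snd] in E1, E2. rewrite E1, E2. split; [lra | ring].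
  - intros [Y X]. exists (snd z). split; [exact Y|]. simpl. split; [rewrite X|]; ring.
Qed.

Lemma spoke_coords k i z : spoke k i z -> exists j, (j <= k)%nat /\ j <> i /\
  0 <= snd z <= 1 /\ fst z = hub_x j * (1 - snd z) + snd z * (INR i + 1 / 2).
Proof.
  intros [j [Hj [Hji Hz]]]. exists j. repeat split; auto; apply segment_hub_base in Hz; tauto.
Qed.

Lemma spoke_fst_bounds k i z : (i <= k)%nat -> spoke k i z -> - 2 ^ k <= fst z <= INR k + 1 / 2.
Proof.
  intros Hik Hz. destruct (spoke_coords _ _ _ Hz) as [j [Hj [_ [Y X]]]].
  pose proof (hub_x_bounds _ _ Hj). pose proof (le_INR _ _ Hik). pose proof (pos_INR i).
  rewrite X. split; nra.
Qed.

Section Fan.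

Variables n k : nat.
Hypothesis hn : (2 <= n)%nat.
Hypothesis hk : (2 <= k)%nat.

Local Notation Fan := (tower_fan n k).

Lemma fan_high z : Fan z -> 1 <= snd z -> exists i, (i <= k)%nat /\ tower n i z.
Proof.
  intros [i [Hi [T | Sp]]] Y; exists i; split; auto.
  destruct (spoke_coords _ _ _ Sp) as [j [_ [_ [Yz X]]]].
  replace z with (base i).
  - apply tower_vertex; lia.
  - assert (Y1 : snd z = 1) by lra. rewrite Y1 in X.
    destruct z as [x y]; cbn [fst snd] in *. rewrite base_eq, X, Y1. f_equal. ring.
Qed.

Lemma fan_low z : Fan z -> snd z < 1 -> exists i, (i <= k)%nat /\ spoke k i z.
Proof.
  intros [i [Hi [T | Sp]]] Y; exists i; split; auto.
  destruct (tower_bounds _ _ _ T). lra.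
Qed.

Lemma segment_between_towers_lt u v i i' :
  segment_in Fan u v -> tower n i' u -> tower n i v -> ~ (i' < i)%nat.
Proof.
  intros Huv Tu Tv Hlt.
  destruct (tower_bounds _ _ _ Tu) as [Yu Xu]. destruct (tower_bounds _ _ _ Tv) as [Yv Xv].
  pose proof (INR_succ_le _ _ Hlt).
  destruct (segment_at_fst u v (INR i - 1 / 4)) as [w [Hw Xw]]; [lra | lra|].
  assert (Yw : 1 <= snd w) by (apply (segment_snd_ge u v); auto; lra).
  destruct (fan_high w (Huv w Hw) Yw) as [m [_ Tw]].
  exact (tower_fst_off_gap _ _ _ _ Tw Xw).
Qed.

Lemma segment_between_towers u v i i' :
  segment_in Fan u v -> tower n i' u -> tower n i v -> i' = i.
Proof.
  intros Huv Tu Tv.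
  pose proof (segment_between_towers_lt u v i i' Huv Tu Tv).
  pose proof (segment_between_towers_lt v u i' i (segment_in_sym _ _ _ Huv) Tv Tu).
  lia.
Qed.

Lemma segment_tower_end u v w i : segment_in Fan u v -> tower n i v ->
  segment u v w -> 1 <= snd w -> tower n i w.
Proof.
  intros Huv Tv Hw Yw.
  destruct (fan_high w (Huv w Hw) Yw) as [i' [_ Tw]].
  replace i with i'; [exact Tw|].
  apply (segment_between_towers w v); [|exact Tw | exact Tv].
  exact (segment_in_sub _ _ _ _ _ Huv Hw (segment_r u v)).
Qed.

Lemma tower_segment_rise u v i : segment_in Fan u v -> tower n i u -> tower n i v ->
  snd v <= snd u + 1.
Proof.
  intros Huv Tu Tv. apply Rnot_lt_le. intros Hrise.
  destruct (tower_coords _ _ _ Tu) as [h [_ [Yu _]]].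
  pose proof (tower_bounds _ _ _ Tu) as [[Yu1 _] _].
  (* the first integer level strictly above [u] leaves room on both sides *)
  assert (Hm : exists m, snd u < INR (S m) <= snd u + 1).
  { destruct (Rlt_le_dec (snd u) (INR h + 1)).
    - exists h. rewrite S_INR. lra.
    - exists (S h). rewrite !S_INR. lra. }
  destruct Hm as [m Hm]. set (M := INR (S m)) in *.
  set (e := Rmin (M - snd u) (snd v - M) / 2).
  assert (He : 0 < e < 1 /\ snd u <= M - e /\ M + e <= snd v).
  { pose proof (Rmin_l (M - snd u) (snd v - M)). pose proof (Rmin_r (M - snd u) (snd v - M)).
    unfold e. repeat split; try lra. apply Rmin_case; lra. }
  assert (Hlt : snd u < snd v) by lra.
  destruct (segment_at_height u v (M - e) Hlt) as [w1 [H1 Y1]]; [lra|].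
  destruct (segment_at_height u v M Hlt) as [w0 [H0 Y0]]; [lra|].
  destruct (segment_at_height u v (M + e) Hlt) as [w2 [H2 Y2]]; [lra|].
  assert (T1 : tower n i w1) by (apply (segment_tower_end u v); auto; lra).
  assert (T0 : tower n i w0) by (apply (segment_tower_end u v); auto; lra).
  assert (T2 : tower n i w2) by (apply (segment_tower_end u v); auto; lra).
  apply (tower_kink n i m e w1 w0 w2 (proj1 He) T1 T0 T2 Y1 Y0 Y2).
  pose proof (segment_collinear _ _ _ H1). pose proof (segment_collinear _ _ _ H0).
  pose proof (segment_collinear _ _ _ H2).
  apply (Rmult_eq_reg_r (snd v - snd u)); [|lra].
  rewrite Y1, Y0, Y2 in *. nra.
Qed.

Lemma segment_into_tower_high q r i : segment_in Fan q r -> tower n i r -> 1 <= snd q ->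
  tower n i q /\ snd r <= snd q + 1.
Proof.
  intros Hqr Tr Yq.
  destruct (fan_high q (Hqr q (segment_l q r)) Yq) as [i' [_ Tq]].
  pose proof (segment_between_towers q r i i' Hqr Tq Tr). subst i'.
  split; [exact Tq|]. exact (tower_segment_rise q r i Hqr Tq Tr).
Qed.

Lemma base_on_segment q r i : segment_in Fan q r -> tower n i r -> snd q < 1 ->
  segment q r (base i).
Proof.
  intros Hqr Tr Yq. pose proof (tower_bounds _ _ _ Tr) as [[Yr _] _].
  destruct (segment_at_height q r 1) as [z [Hz Yz]]; [lra | lra|].
  replace (base i) with z; [exact Hz|].
  assert (Tz : tower n i z) by (apply (segment_tower_end q r); auto; lra).
  pose proof (tower_fst_at_level n i z 1 Tz Yz) as Xz.
  destruct z as [x y]; cbn [fst snd] in *. rewrite Xz, Yz. reflexivity.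
Qed.

(* Points of [q, base i] close to [base i] can only lie on spokes ending at [base i]:
   the spokes of any other base stay at horizontal distance about 1 from it. *)
Lemma segment_to_base_low q i : (i <= k)%nat -> segment_in Fan q (base i) -> snd q < 1 ->
  spoke k i q.
Proof.
  intros Hik Hq Yq.
  destruct (fan_low q (Hq q (segment_l _ _)) Yq) as [iq [Hiq Sq]].
  pose proof (spoke_fst_bounds _ _ _ Hiq Sq) as Xq.
  destruct (spoke_coords _ _ _ Sq) as [_ [_ [_ [Yq0 _]]]].
  pose proof (pow_R1_Rle 2 k ltac:(lra)). pose proof (le_INR _ _ Hik). pose proof (pos_INR i).
  set (W := 2 ^ k + INR k + 1) in *.
  assert (HW : 2 <= W) by (unfold W; pose proof (pos_INR k); lra).
  set (t := / (4 * W)).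
  assert (Ht : 4 * W * t = 1) by (unfold t; field; lra).
  assert (Ht0 : 0 < t <= 1) by (clearbody t; nra).
  set (b := INR i + 1 / 2) in *.
  set (zs := ((1 - t) * b + t * fst q, (1 - t) * 1 + t * snd q)).
  assert (Hzs : segment (base i) q zs) by (rewrite base_eq; apply segment_interpolate; lra).
  destruct (fan_low zs (Hq zs (segment_sym _ _ _ Hzs))) as [i' [Hi' Szs]]; [simpl; nra|].
  destruct (spoke_coords _ _ _ Szs) as [j [Hj [Hji [_ Xzs]]]].
  cbn [zs fst snd] in Xzs.
  pose proof (hub_x_bounds _ _ Hj). pose proof (le_INR _ _ Hi'). pose proof (pos_INR i').
  set (b' := INR i' + 1 / 2) in *.
  assert (E : b - b' = t * ((b - fst q) + (1 - snd q) * (hub_x j - b'))) by lra.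
  assert (Hi'i : i' = i).
  { assert (E4 : 4 * W * (b - b') = (b - fst q) + (1 - snd q) * (hub_x j - b'))
      by (rewrite E, <- Rmult_assoc, Ht; ring).
    assert (P1 : - W <= (1 - snd q) * (hub_x j - b') <= 0).
    { assert (0 <= 1 - snd q <= 1) by lra.
      assert (- W <= hub_x j - b' <= 0) by (unfold b', W; lra). nra. }
    assert (P2 : - W <= b - fst q <= W) by (unfold b, W; lra).
    assert (Hbb : -1 < b - b' < 1) by nra.
    apply INR_close_eq. unfold b, b' in Hbb. lra. }
  subst i'. exists j. split; [exact Hj | split; [exact Hji|]].
  apply segment_hub_base. split; [lra|].
  apply (Rmult_eq_reg_l t); [|lra]. unfold b, b' in Xzs |- *. lra.
Qed.

(* Beyond [base i] the line of a spoke heads right of tower [i]. *)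
Lemma tower_beyond_spoke q r i : spoke k i q -> snd q < 1 -> segment q r (base i) ->
  tower n i r -> r = base i.
Proof.
  intros Sq Yq Hb Tr.
  destruct (spoke_coords _ _ _ Sq) as [j [Hj [_ [_ Xq]]]].
  pose proof (hub_x_bounds _ _ Hj). pose proof (pos_INR i).
  pose proof (tower_bounds _ _ _ Tr) as [[Yr _] [_ Xr]].
  pose proof (segment_collinear _ _ _ Hb) as C. rewrite base_eq in C. cbn [fst snd] in C.
  set (b := INR i + 1 / 2) in *.
  assert (Hxr : fst r - fst q = (b - hub_x j) * (snd r - snd q)).
  { apply (Rmult_eq_reg_l (1 - snd q)); [|lra]. rewrite Xq in C |- *. rewrite <- C. ring. }
  assert (Xr' : fst r = b + (b - hub_x j) * (snd r - 1)) by (rewrite Xq in Hxr; lra).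
  assert (Yr1 : snd r = 1).
  { assert (0 < b - hub_x j) by (unfold b; lra). nra. }
  destruct r as [x y]; cbn [fst snd] in *. rewrite base_eq, Xr', Yr1. f_equal. unfold b. ring.
Qed.

Lemma segment_into_tower_low q r i : (i <= k)%nat -> segment_in Fan q r -> tower n i r ->
  snd q < 1 -> spoke k i q /\ r = base i.
Proof.
  intros Hik Hqr Tr Yq.
  pose proof (base_on_segment q r i Hqr Tr Yq) as Hb.
  assert (Sq : spoke k i q).
  { apply (segment_to_base_low q i Hik); [|exact Yq].
    exact (segment_in_sub _ _ _ _ _ Hqr (segment_l q r) Hb). }
  split; [exact Sq|]. exact (tower_beyond_spoke q r i Sq Yq Hb Tr).
Qed.

Lemma segment_into_tower q r i : (i <= k)%nat -> segment_in Fan q r -> tower n i r ->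
  (tower n i q /\ snd r <= snd q + 1) \/ (spoke k i q /\ r = base i).
Proof.
  intros Hik Hqr Tr. destruct (Rlt_le_dec (snd q) 1) as [Yq | Yq].
  - right. exact (segment_into_tower_low q r i Hik Hqr Tr Yq).
  - left. exact (segment_into_tower_high q r i Hqr Tr Yq).
Qed.

Lemma short_path_to_top i l p : (i <= k)%nat -> path_in Fan p l (vertex i n) ->
  (S (length l) < n)%nat -> tower n i p /\ INR n <= snd p + INR (S (length l)).
Proof.
  intros Hik. revert p. induction l as [|z l IH]; intros p Hp Hlen; cbn [length path_in] in *.
  - destruct (segment_into_tower p (vertex i n) i Hik Hp (tower_vertex n i n hn ltac:(lia)))
      as [[Tp Y] | [_ E]].
    + split; [exact Tp|]. cbn [snd vertex] in Y. simpl INR. lra.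
    + exfalso. injection E as _ E. change 1 with (INR 1) in E. apply INR_eq in E. lia.
  - destruct Hp as [Hpz Hz]. destruct (IH z Hz ltac:(lia)) as [Tz Yz].
    destruct (segment_into_tower p z i Hik Hpz Tz) as [[Tp Y] | [_ E]].
    + split; [exact Tp|]. rewrite !S_INR in *. lra.
    + exfalso. subst z. rewrite base_eq, !S_INR in Yz. cbn [snd] in Yz.
      pose proof (INR_succ_le _ _ Hlen). rewrite !S_INR in *. lra.
Qed.

Lemma visible_top i p : (i <= k)%nat -> visible_le Fan n p (vertex i n) ->
  tower n i p \/ spoke k i p.
Proof.
  intros Hik [m [Hm [l [Hl [_ Hp]]]]]. destruct l as [|z l]; cbn [path_in] in Hp.
  - destruct (segment_into_tower p (vertex i n) i Hik Hp (tower_vertex n i n hn ltac:(lia)))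
      as [[Tp _] | [Sp _]]; auto.
  - destruct Hp as [Hpz Hz]. cbn [length] in Hl.
    destruct (short_path_to_top i l z Hik Hz ltac:(lia)) as [Tz _].
    destruct (segment_into_tower p z i Hik Hpz Tz) as [[Tp _] | [Sp _]]; auto.
Qed.

Lemma tower_or_spoke_high_fst i p : tower n i p \/ spoke k i p -> 1 <= snd p ->
  INR i <= fst p <= INR i + 1 / 2.
Proof.
  intros [Tp | Sp] Yp.
  - exact (proj2 (tower_bounds _ _ _ Tp)).
  - destruct (spoke_coords _ _ _ Sp) as [j [_ [_ [Y X]]]].
    replace (snd p) with 1 in X by lra. rewrite X. lra.
Qed.

Lemma no_common_tower_or_spoke p : ~ (forall i, (i <= k)%nat -> tower n i p \/ spoke k i p).
Proof.
  intros Hall. destruct (Rlt_le_dec (snd p) 1) as [Yp | Yp].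
  - assert (Hsp : forall i, (i <= k)%nat -> spoke k i p).
    { intros i Hi. destruct (Hall i Hi) as [Tp | Sp]; [|exact Sp].
      destruct (tower_bounds _ _ _ Tp). lra. }
    destruct (spoke_coords _ _ _ (Hsp 0%nat ltac:(lia))) as [j0 [Hj0 [_ [Y0 X0]]]].
    destruct (Req_dec (snd p) 0) as [Y | Y].
    + destruct (spoke_coords _ _ _ (Hsp j0 Hj0)) as [j1 [_ [Hj1 [_ X1]]]].
      rewrite Y in X0, X1. apply Hj1, pow2_inj. unfold hub_x in *. lra.
    + destruct (spoke_coords _ _ _ (Hsp 1%nat ltac:(lia))) as [j1 [_ [_ [_ X1]]]].
      destruct (spoke_coords _ _ _ (Hsp 2%nat ltac:(lia))) as [j2 [_ [_ [_ X2]]]].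
      simpl INR in X0, X1, X2.
      assert (E1 : (hub_x j0 - hub_x j1) * (1 - snd p) = snd p) by lra.
      assert (E2 : (hub_x j1 - hub_x j2) * (1 - snd p) = snd p) by lra.
      assert (E : hub_x j0 - hub_x j1 = hub_x j1 - hub_x j2)
        by (apply (Rmult_eq_reg_r (1 - snd p)); lra).
      assert (j0 = j2) as <- by (apply (pow2_midpoint j0 j1 j2); unfold hub_x in E; lra).
      apply Y. rewrite <- E1. replace (hub_x j0 - hub_x j1) with 0 by lra. ring.
  - pose proof (tower_or_spoke_high_fst 0 p (Hall 0%nat ltac:(lia)) Yp).
    pose proof (tower_or_spoke_high_fst 1 p (Hall 1%nat ltac:(lia)) Yp).
    simpl INR in *. lra.
Qed.

Lemma hub_in_fan m : (m <= k)%nat -> Fan (hub m).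
Proof.
  intros Hm. set (i := if Nat.eq_dec m 0 then 1%nat else 0%nat).
  assert (Hmi : m <> i /\ (i <= k)%nat) by (unfold i; destruct (Nat.eq_dec m 0); lia).
  exists i. split; [tauto|]. right. exists m. repeat split; try tauto. apply segment_l.
Qed.

Lemma spoke_in_fan m i : (m <= k)%nat -> (i <= k)%nat -> m <> i ->
  segment_in Fan (hub m) (base i).
Proof. intros Hm Hi Hmi z Hz. exists i. split; [exact Hi|]. right. exists m. auto. Qed.

Lemma tower_link_in_fan i h : (i <= k)%nat -> (1 <= h < n)%nat ->
  segment_in Fan (vertex i h) (vertex i (S h)).
Proof. intros Hi Hh z Hz. exists i. split; [exact Hi|]. left. exists h. auto. Qed.

Lemma tower_climb i h z : (i <= k)%nat -> (1 <= h < n)%nat ->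
  segment (vertex i h) (vertex i (S h)) z ->
  forall c a, (1 <= a)%nat -> (a + c = h)%nat ->
  path_in Fan (vertex i a) (map (vertex i) (seq (S a) c)) z.
Proof.
  intros Hi Hh Hz c. induction c as [|c IH]; intros a Ha Hac; cbn [seq map path_in].
  - replace a with h by lia. intros w Hw. apply (tower_link_in_fan i h Hi Hh).
    exact (segment_sub _ _ _ _ _ (segment_l _ _) Hz Hw).
  - split; [apply tower_link_in_fan; auto; lia | apply IH; lia].
Qed.

Lemma visible_from_hub m i z : (m <= k)%nat -> (i <= k)%nat -> m <> i ->
  tower n i z \/ spoke k i z -> visible_le Fan n (hub m) z.
Proof.
  intros Hm Hi Hmi [[h [Hh Hz]] | [j [Hj [Hji Hz]]]].
  - exists (S h). split; [lia|]. exists (map (vertex i) (seq 1 h)).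
    split; [rewrite length_map, length_seq; lia|]. split.
    + apply Injective_map_NoDup; [|apply seq_NoDup].
      intros a b E. injection E as _ E. exact (INR_eq _ _ E).
    + destruct h as [|h]; [lia|]. cbn [seq map path_in]. split.
      * exact (spoke_in_fan m i Hm Hi Hmi).
      * exact (tower_climb i (S h) z Hi Hh Hz h 1 ltac:(lia) ltac:(lia)).
  - exists 2%nat. split; [lia|]. exists [base i]. split; [reflexivity|]. split.
    + constructor; [intros []|constructor].
    + cbn [path_in]. split; [exact (spoke_in_fan m i Hm Hi Hmi)|].
      intros w Hw. exists i. split; [exact Hi|]. right. exists j. repeat split; auto.
      exact (segment_sub _ _ _ _ _ (segment_r _ _) Hz Hw).
Qed.

Lemma fan_indices l : Forall Fan l ->
  exists L, Forall2 (fun z i => (i <= k)%nat /\ (tower n i z \/ spoke k i z)) l L.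
Proof.
  induction 1 as [|z l [i Hz] _ [L HL]]; [exists []; constructor|].
  exists (i :: L). constructor; assumption.
Qed.

Lemma k_points_visible l : length l = k -> Forall Fan l ->
  exists p, Fan p /\ Forall (visible_le Fan n p) l.
Proof.
  intros Hl Hfan. destruct (fan_indices l Hfan) as [L HL].
  destruct (exists_fresh_index k L) as [m [Hm Hfresh]];
    [rewrite <- (Forall2_length HL); lia|].
  exists (hub m). split; [exact (hub_in_fan m Hm)|].
  clear Hl Hfan. induction HL as [|z i l L [Hi Hz] _ IH]; constructor.
  - apply (visible_from_hub m i z Hm Hi); [|exact Hz].
    intros ->. apply Hfresh. left. reflexivity.
  - apply IH. intros HmL. apply Hfresh. right. exact HmL.
Qed.

Lemma in_tops z : In z (tops n k) <-> exists i, (i <= k)%nat /\ z = vertex i n.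
Proof.
  unfold tops. rewrite in_map_iff. split.
  - intros [i [<- Hi]]. apply in_seq in Hi. exists i. split; [lia | reflexivity].
  - intros [i [Hi ->]]. exists i. split; [reflexivity|]. apply in_seq. lia.
Qed.

Lemma tops_NoDup : NoDup (tops n k).
Proof.
  apply Injective_map_NoDup; [|apply seq_NoDup].
  intros a b E. injection E as E. apply INR_eq. lra.
Qed.

Lemma tops_in_fan : Forall Fan (tops n k).
Proof.
  apply Forall_forall. intros z Hz. apply in_tops in Hz as [i [Hi ->]].
  exists i. split; [exact Hi|]. left. apply tower_vertex; lia.
Qed.

Lemma tops_not_visible : ~ (exists p, Fan p /\ Forall (visible_le Fan n p) (tops n k)).
Proof.
  intros [p [_ Hvis]]. apply (no_common_tower_or_spoke p). intros i Hi.
  apply (visible_top i p Hi). rewrite Forall_forall in Hvis. apply Hvis.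
  apply in_tops. exists i. auto.
Qed.

End Fan.

Theorem theorem1p6 (n k : nat) (hn : (2 <= n)%nat) (hk : (2 <= k)%nat) :
  exists S : pt -> Prop,
    (forall l : list pt, length l = k -> NoDup l -> Forall S l ->
       exists p : pt, S p /\ Forall (fun x => visible_le S n p x) l) /\
    (exists l : list pt, length l = (k + 1)%nat /\ NoDup l /\ Forall S l /\
       ~ (exists p : pt, S p /\ Forall (fun x => visible_le S n p x) l)).
Proof.
  exists (tower_fan n k). split.
  - intros l Hl _ Hfan. exact (k_points_visible n k hn hk l Hl Hfan).
  - exists (tops n k). split; [|split; [|split]].
    + unfold tops. rewrite length_map, length_seq. lia.
    + exact (tops_NoDup n k).
    + exact (tops_in_fan n k hn hk).
    + exact (tops_not_visible n k hn hk).
Qed.
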